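(* Let $V$ be a vertex algebra and $a\in V$. Then: (1) $a_0a_0\cdots a_0a\in C_2(V)$ (for any positive number of factors $a_0$); (2) if $n_1,\dots,n_t\in\{0,-1\}$ and the number $k$ of indices $i$ with $n_i=-1$ satisfies $k<t$, then $a_{n_1}a_{n_2}\cdots a_{n_t}a\equiv \underbrace{a_{-1}\cdots a_{-1}}_{k}\underbrace{a_0\cdots a_0}_{t-k}a\equiv 0 \pmod{C_2(V)}$.
   Context: A vertex algebra $(V,Y,\mathbf{1})$ is over $\mathbb{C}$; for $u\in V$ write $Y(u,z)=\sum_{n\in\mathbb{Z}}u_nz^{-n-1}$ with $u_n\in\operatorname{End}V$. Iterated products are nested to the right: $a_{n_1}a_{n_2}\cdots a_{n_t}a=a_{n_1}(a_{n_2}(\cdots(a_{n_t}a)))$. $C_2(V)=\operatorname{span}_{\mathbb{C}}\{u_{-2}v: u,v\in V\}$. *)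

From mathcomp Require Import all_boot all_order all_algebra.
From mathcomp Require Import complex.
From mathcomp Require Import Rstruct.
From Stdlib Require Import Reals.
Set Implicit Arguments. Unset Strict Implicit. Unset Printing Implicit Defensive.
Import Order.TTheory GRing.Theory Num.Theory.
Local Open Scope ring_scope.

Definition CC : fieldType := complex R.

Definition gbinom (p : int) (i : nat) : CC :=
  (\prod_(j < i) (p%:~R - (j : nat)%:R)) / (i`!)%:R.

(* [Y u n v] is  u_n v, the coefficient of z^{-n-1} in Y(u,z)v. *)
Definition vertex_algebra_axioms (V : lmodType CC)
    (Y : V -> int -> V -> V) (vac : V) : Prop :=
  (forall (a : CC) (u u' v : V) (n : int),
      Y (a *: u + u') n v = a *: Y u n v + Y u' n v) /\
  (forall (a : CC) (u v v' : V) (n : int),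
      Y u n (a *: v + v') = a *: Y u n v + Y u n v') /\
  (* truncation: Y(u,z)v has only finitely many negative powers of z *)
  (forall u v : V, exists N : int, forall n : int, N <= n -> Y u n v = 0) /\
  (* vacuum: Y(1,z) = id *)
  (forall (v : V) (n : int), Y vac n v = if n == -1 then v else 0) /\
  (* creation: Y(u,z)1 = u + z V[[z]] *)
  (forall u : V, Y u (-1) vac = u /\ forall n : int, 0 <= n -> Y u n vac = 0) /\
  (* Borcherds (Jacobi) identity; the sums over i >= 0 are finite by truncation,
     so we require equality of all sufficiently long partial sums *)
  (forall (u v w : V) (p q r : int), exists N : nat, forall M : nat, leq N M ->
      \sum_(i < M) gbinom p i *: Y (Y u (r + (i : nat)%:Z) v) (p + q - (i : nat)%:Z) w
    = \sum_(i < M) ((-1) ^+ i * gbinom r i) *: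
          (Y u (p + r - (i : nat)%:Z) (Y v (q + (i : nat)%:Z) w)
           - ((-1) ^ r) *: Y v (q + r - (i : nat)%:Z) (Y u (p + (i : nat)%:Z) w))).

Definition C2 (V : lmodType CC) (Y : V -> int -> V -> V) (x : V) : Prop :=
  exists s : seq (CC * V * V),
    x = \sum_(t <- s) t.1.1 *: Y t.1.2 (-2) t.2.

(* Right-nested iterated product  a_{n_1} a_{n_2} ... a_{n_t} a  for ns = [n_1;...;n_t]. *)
Definition iter_prod (V : lmodType CC) (Y : V -> int -> V -> V) (a : V)
    (ns : seq int) : V :=
  foldr (fun n x => Y a n x) a ns.

(* Modes u_n with n <= -2 map into C_2(V): iterate the translation property
   (u_{-2}1)_p = -p u_{p-1}.  The commutator and associativity formulas then
   show that C_2(V) is stable under a_p (p <= 0) from the left and under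
   x |-> x_q w (q <= 0), and skew symmetry puts u_0 v + v_0 u, hence a_0 a,
   into C_2(V).  Since a_0 is a derivation of every product,
   a_0 a_{-1} ... a_{-1} a lies in C_2(V), and any word in a_0, a_{-1} that
   contains a_0 arises from such an element by applying further modes a_0, a_{-1}.
   A word with k < t has a letter a_0, and so does its sorted form. *)

From mathcomp Require Import all_boot all_order all_algebra.
From mathcomp Require Import complex Rstruct zify.
Set Implicit Arguments. Unset Strict Implicit. Unset Printing Implicit Defensive.
Import GRing.Theory Num.Theory.
Local Open Scope ring_scope.

Lemma linear_fun0 (R : pzRingType) (U W : lmodType R) (f : U -> W) :
  linear f -> f 0 = 0.
Proof.
move=> lf; have := lf 1 0 0; rewrite !scale1r !addr0 => f00.
by apply: (addrI (f 0)); rewrite addr0 -f00.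
Qed.

Lemma sum_ord_only0 (V : nmodType) M (F : 'I_M.+1 -> V) :
  (forall i : 'I_M.+1, (0 < i)%N -> F i = 0) -> \sum_i F i = F ord0.
Proof. by move=> F0; rewrite big_ord_recl big1 ?addr0 // => i _; apply: F0. Qed.

Lemma gbinom0 p : gbinom p 0 = 1.
Proof. by rewrite /gbinom big_ord0 fact0 divr1. Qed.

Lemma gbinom1 p : gbinom p 1 = p%:~R.
Proof. by rewrite /gbinom big_ord1 subr0 divr1. Qed.

Lemma gbinom0S i : gbinom 0 i.+1 = 0.
Proof. by rewrite /gbinom big_ord_recl subr0 !mul0r. Qed.

Lemma all_eqN1_of_notin0 (ns : seq int) :
  all (fun n : int => (n == 0) || (n == -1)) ns -> 0 \notin ns -> all (pred1 (-1)) ns.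
Proof.
move=> ns01 ns_no0; apply/allP => n n_ns.
by case/orP: (allP ns01 n n_ns) => // /eqP n0; rewrite -n0 n_ns in ns_no0.
Qed.

Lemma mem0_of_count_eqN1_lt (ns : seq int) :
  all (fun n : int => (n == 0) || (n == -1)) ns ->
  (count (fun n : int => n == -1%R) ns < size ns)%N -> 0 \in ns.
Proof.
move=> ns01; apply: contraTT => /(all_eqN1_of_notin0 ns01).
by rewrite all_count -leqNgt => /eqP ->.
Qed.

Section C2Subspace.

Variables (V : lmodType CC) (Y : V -> int -> V -> V).

Lemma C2_0 : C2 Y 0.
Proof. by exists [::]; rewrite big_nil. Qed.

Lemma C2_Ym2 u v : C2 Y (Y u (-2) v).
Proof. by exists [:: (1, u, v)]; rewrite big_seq1 scale1r. Qed.

Lemma C2D x y : C2 Y x -> C2 Y y -> C2 Y (x + y).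
Proof. by move=> [s ->] [t ->]; exists (s ++ t); rewrite big_cat. Qed.

Lemma C2Z c x : C2 Y x -> C2 Y (c *: x).
Proof.
move=> [s ->]; exists [seq (c * t.1.1, t.1.2, t.2) | t <- s].
by rewrite big_map scaler_sumr; apply: eq_bigr => t _; rewrite scalerA.
Qed.

Lemma C2B x y : C2 Y x -> C2 Y y -> C2 Y (x - y).
Proof. by move=> Cx Cy; rewrite -scaleN1r; apply/C2D/C2Z. Qed.

Lemma C2_sum M (F : 'I_M -> V) : (forall i, C2 Y (F i)) -> C2 Y (\sum_i F i).
Proof. by move=> CF; apply: big_ind => //; [exact: C2_0 | exact: C2D]. Qed.

Lemma C2_linear (f : V -> V) :
  linear f -> (forall u v, C2 Y (f (Y u (-2) v))) -> forall x, C2 Y x -> C2 Y (f x).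
Proof.
move=> lf Cf x [s ->]; elim: s => [|t s IHs].
  by rewrite big_nil (linear_fun0 lf); exact: C2_0.
by rewrite big_cons lf; apply/C2D/IHs/C2Z.
Qed.

End C2Subspace.

Section VertexAlgebra.

Variables (V : lmodType CC) (Y : V -> int -> V -> V) (vac : V).
Hypothesis HV : vertex_algebra_axioms Y vac.

Lemma Y_linearl n v : linear (fun u => Y u n v).
Proof. by case: HV => linl _ c u u'; exact: linl. Qed.

Lemma Y_linearr u n : linear (Y u n).
Proof. by case: HV => _ [linr _] c v v'; exact: linr. Qed.

Lemma Y0l n v : Y 0 n v = 0.
Proof. exact: linear_fun0 (Y_linearl n v). Qed.

Lemma Y0r u n : Y u n 0 = 0.
Proof. exact: linear_fun0 (Y_linearr u n). Qed.

Lemma Y_vac n v : n != -1 -> Y vac n v = 0.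
Proof. by case: HV => _ [_ [_ [Yvac _]]] /negbTE n1; rewrite Yvac n1. Qed.

Lemma Y_create u : Y u (-1) vac = u.
Proof. by case: HV => _ [_ [_ [_ [create _]]]]; case: (create u). Qed.

Lemma Y_create_ge0 u n : 0 <= n -> Y u n vac = 0.
Proof. by move=> n0; case: HV => _ [_ [_ [_ [create _]]]]; apply: (create u).2. Qed.

Lemma borcherds u v w p q r : exists N : nat, forall M : nat, (N <= M)%N ->
  \sum_(i < M) gbinom p i *: Y (Y u (r + i%:Z) v) (p + q - i%:Z) w
  = \sum_(i < M) ((-1) ^+ i * gbinom r i) *:
      (Y u (p + r - i%:Z) (Y v (q + i%:Z) w)
       - ((-1) ^ r) *: Y v (q + r - i%:Z) (Y u (p + i%:Z) w)).
Proof. by case: HV => _ [_ [_ [_ [_ borch]]]]; exact: borch. Qed.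

Lemma Y_translation x p w : Y (Y x (-2) vac) p w = - (p%:~R *: Y x (p - 1) w).
Proof.
have [N borch] := borcherds x vac w p 0 (-2).
have := borch N.+2 (leqW (leqnSn _)).
rewrite [RHS]big1 => [|i _]; last first.
  by rewrite !Y_vac ?Y0r ?scaler0 ?subr0 ?scaler0 //; apply/eqP; lia.
rewrite 2!big_ord_recl big1 => [|i _] /=; last first.
  by rewrite Y_create_ge0 ?Y0l ?scaler0 //=; lia.
rewrite gbinom0 gbinom1 scale1r Y_create subr0 !addr0 => /eqP.
by rewrite addr_eq0 => /eqP ->.
Qed.

Lemma C2_Y_leN2 x n w : n <= -2 -> C2 Y (Y x n w).
Proof.
move=> n_le; have -> : n = - (`|n| - 2)%N.+2%:Z by lia.
elim: (`|n| - 2)%N x w => [|m IHm] x w; first exact: C2_Ym2.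
have mS2_neq0 : (m.+2%:Z%:~R : CC) != 0 by rewrite intr_eq0.
have -> : Y x (- m.+3%:Z) w = (m.+2%:Z%:~R)^-1 *: Y (Y x (-2) vac) (- m.+2%:Z) w.
  rewrite Y_translation intrN scaleNr opprK scalerA mulVf // scale1r.
  by congr Y; lia.
exact/C2Z/IHm.
Qed.

Lemma commutator_formula u v w p q : exists N : nat, forall M : nat, (N <= M)%N ->
  Y u p (Y v q w)
  = Y v q (Y u p w) + \sum_(i < M) gbinom p i *: Y (Y u i v) (p + q - i%:Z) w.
Proof.
have [N borch] := borcherds u v w p q 0.
exists N.+1 => -[//|M] N_le; apply/eqP; rewrite addrC -subr_eq; apply/eqP.
transitivity (\sum_(i < M.+1) gbinom p i *: Y (Y u (0 + i%:Z) v) (p + q - i%:Z) w).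
  rewrite borch ?(ltnW N_le) // sum_ord_only0 => [|[[|i] i_lt] // _].
    by rewrite /= gbinom0 mulr1 expr0 expr0z !scale1r !addr0.
  by rewrite /= gbinom0S mulr0 scale0r.
by apply: eq_bigr => i _; rewrite add0r.
Qed.

Lemma associativity_formula u v w q r : exists N : nat, forall M : nat, (N <= M)%N ->
  Y (Y u r v) q w
  = \sum_(i < M) ((-1) ^+ i * gbinom r i) *:
      (Y u (r - i%:Z) (Y v (q + i%:Z) w) - ((-1) ^ r) *: Y v (q + r - i%:Z) (Y u i w)).
Proof.
have [N borch] := borcherds u v w 0 q r.
exists N.+1 => -[//|M] N_le.
transitivity (\sum_(i < M.+1) gbinom 0 i *: Y (Y u (r + i%:Z) v) (0 + q - i%:Z) w).
  rewrite sum_ord_only0 => [|[[|i] i_lt] // _]; last by rewrite /= gbinom0S scale0r.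
  by rewrite /= gbinom0 scale1r !addr0 add0r.
by rewrite borch ?(ltnW N_le) //; apply: eq_bigr => i _; rewrite !add0r.
Qed.

Lemma C2_Yr a p x : p <= 0 -> C2 Y x -> C2 Y (Y a p x).
Proof.
move=> p_le; apply: C2_linear (Y_linearr a p) _ x => u v.
have [N comm] := commutator_formula a u v p (-2).
rewrite (comm N) //; apply/C2D/C2_sum => [|i]; first exact: C2_Ym2.
by apply/C2Z/C2_Y_leN2; lia.
Qed.

Lemma C2_Yl x q w : q <= 0 -> C2 Y x -> C2 Y (Y x q w).
Proof.
move=> q_le; apply: C2_linear (Y_linearl q w) _ x => u v /=.
have [N assoc] := associativity_formula u v w q (-2).
rewrite (assoc N) //; apply: C2_sum => i.
by apply/C2Z/C2B; last apply: C2Z; apply: C2_Y_leN2; lia.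
Qed.

Lemma C2_skew u v : C2 Y (Y u 0 v + Y v 0 u).
Proof.
have [N borch] := borcherds u v vac (-1) (-1) 1.
have := borch N.+1 (leqnSn _).
rewrite [RHS]sum_ord_only0 => [|[[|i] i_lt] //= _]; last first.
  by rewrite !Y_create_ge0 ?Y0r ?scaler0 ?subr0 ?scaler0 //; lia.
rewrite /= gbinom0 mulr1 expr0 scale1r subr0 addr0 addNr !Y_create.
rewrite expr1z scaleN1r opprK => <-.
by apply: C2_sum => i; apply/C2Z/C2_Y_leN2; lia.
Qed.

Lemma C2_Y0_self a : C2 Y (Y a 0 a).
Proof.
have two_neq0 : (2%:R : CC) != 0 by rewrite pnatr_eq0.
rewrite -[Y a 0 a]scale1r -(mulVf two_neq0) -scalerA scaler_nat mulr2n.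
exact/C2Z/C2_skew.
Qed.

Lemma Y0_derivation a b q x : Y a 0 (Y b q x) = Y (Y a 0 b) q x + Y b q (Y a 0 x).
Proof.
have [N comm] := commutator_formula a b x 0 q.
rewrite (comm N.+1) // big_ord_recl big1 => [|i _]; last by rewrite gbinom0S scale0r.
by rewrite gbinom0 scale1r addr0 add0r subr0 addrC.
Qed.

Lemma C2_Y0_iter_prodN1 a k : C2 Y (Y a 0 (iter_prod Y a (nseq k (-1)))).
Proof.
elim: k => [|k IHk]; first exact: C2_Y0_self.
rewrite /= Y0_derivation; apply: C2D; first exact/C2_Yl/C2_Y0_self.
exact: C2_Yr IHk.
Qed.

Lemma C2_iter_prod a ns :
  all (fun n : int => (n == 0) || (n == -1)) ns -> 0 \in ns -> C2 Y (iter_prod Y a ns).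
Proof.
elim: ns => [//|n ns IHns] /= /andP[n01 ns01].
have [ns0 _ | ns_no0] := boolP (0 \in ns).
  by apply: C2_Yr (IHns ns01 ns0); case/orP: n01 => /eqP ->.
rewrite in_cons (negbTE ns_no0) orbF => /eqP <-.
by rewrite (all_pred1P _ _ (all_eqN1_of_notin0 ns01 ns_no0)); exact: C2_Y0_iter_prodN1.
Qed.

End VertexAlgebra.

Theorem mainTheorem2 (V : lmodType CC) (Y : V -> int -> V -> V) (vac : V)
    (HV : vertex_algebra_axioms Y vac) (a : V) :
  (* (1) *)
  (forall t : nat, (0 < t)%N -> C2 Y (iter_prod Y a (nseq t 0))) /\
  (* (2) *)
  (forall ns : seq int,
      all (fun n => (n == 0) || (n == -1)) ns ->
      let k := count (fun n => n == -1) ns in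
      (k < size ns)%N ->
      C2 Y (iter_prod Y a ns
            - iter_prod Y a (nseq k (-1) ++ nseq (size ns - k) 0)) /\
      C2 Y (iter_prod Y a (nseq k (-1) ++ nseq (size ns - k) 0))).
Proof.
split=> [t t_gt0 | ns ns01 k k_lt].
  by apply: (C2_iter_prod HV); rewrite ?all_nseq ?mem_nseq ?t_gt0 ?orbT.
have sorted_C2 : C2 Y (iter_prod Y a (nseq k (-1) ++ nseq (size ns - k) 0)).
  apply: (C2_iter_prod HV); first by rewrite all_cat !all_nseq !orbT.
  by rewrite mem_cat !mem_nseq subn_gt0 k_lt eqxx orbT.
split=> //; apply: C2B => //.
exact: (C2_iter_prod HV a ns01 (mem0_of_count_eqN1_lt ns01 k_lt)).
Qed.
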